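(* Let $(\mathbb{X},d)$ be a geodesic metric space and let $\varrho$ be a continuous admissible radius function in a bounded domain $\Omega\subset\mathbb{X}$. Let $u\in C(\overline\Omega)$ and let $K\subset\Omega$ be compact. If $\omega$ is a concave modulus of continuity for $u$ on $\widetilde K$ (i.e. $|u(s)-u(t)|\le\omega(d(s,t))$ for all $s,t\in\widetilde K$), then for all $x,y\in K$, $$|\mathcal{S}u(x)-\mathcal{S}u(y)|\leq\omega\left(\widehat\omega_\varrho(d(x,y))\right).$$
   Context: A metric space is geodesic if any two points $x,y$ are joined by a curve of length $d(x,y)$. An admissible radius function in $\Omega$ is $\varrho\in C(\overline\Omega)$, $\varrho\ge0$, with $0<\varrho(x)\leq\mathrm{dist}(x,\partial\Omega)$ for $x\in\Omega$ and $\varrho=0$ exactly on $\partial\Omega$. $B_x=\overline{B}(x,\varrho(x))$, $\widetilde K=\bigcup_{x\in K}B_x$, and $\mathcal{S}u(x)=\frac12(\sup_{B_x}u+\inf_{B_x}u)$. A modulus of continuity is a nondecreasing continuous $\omega:[0,\mathrm{diam}\,\Omega]\to[0,\infty)$ with $\omega(0)=0$. Fix a concave modulus of continuity $\omega_{\varrho,\Omega}$ for $\varrho$ on $\Omega$ with $\omega_{\varrho,\Omega}(\mathrm{diam}\,\Omega)\le\mathrm{diam}\,\Omega$; set $\widehat\omega_\varrho(t)=t$ if $\omega_{\varrho,\Omega}(t)\le t$ for all $t\in[0,\mathrm{diam}\,\Omega]$, and otherwise $\widehat\omega_\varrho(t)=\frac{\mathrm{diam}\,\Omega}{\omega_{\varrho,\Omega}(\mathrm{diam}\,\Omega)}\omega_{\varrho,\Omega}(t)$.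 *)

From HB Require Import structures.
From mathcomp Require Import all_boot all_order all_algebra.
From mathcomp Require Import boolp classical_sets reals constructive_ereal ereal.
Set Implicit Arguments. Unset Strict Implicit. Unset Printing Implicit Defensive.
Import Order.TTheory GRing.Theory Num.Theory.
Local Open Scope classical_set_scope.
Local Open Scope ring_scope.

Section MetricDefs.
Variables (R : realType) (X : Type) (d : X -> X -> R).

Definition is_metric : Prop :=
  [/\ (forall x y, 0 <= d x y), (forall x y, d x y = 0 <-> x = y),
      (forall x y, d x y = d y x) & (forall x y z, d x z <= d x y + d y z)].

Definition open_set (A : set X) : Prop :=
  forall x, A x -> exists2 e : R, 0 < e & forall y, d x y < e -> A y.

Definition mclosure (A : set X) : set X :=
  [set x | forall e : R, 0 < e -> exists2 a, A a & d x a < e].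

Definition mboundary (A : set X) : set X := mclosure A `&` mclosure (~` A).

Definition connected_set (A : set X) : Prop :=
  forall U V : set X, open_set U -> open_set V -> A `<=` U `|` V ->
    A `&` U !=set0 -> A `&` V !=set0 -> A `&` U `&` V !=set0.

Definition bounded_set (A : set X) : Prop :=
  exists M : R, forall x y, A x -> A y -> d x y <= M.

Definition domain (A : set X) : Prop :=
  [/\ A !=set0, open_set A & connected_set A].

(* sequential compactness (equivalent to compactness in metric spaces) *)
Definition seq_lim (s : nat -> X) (l : X) : Prop :=
  forall e : R, 0 < e -> exists N, forall n, (N <= n)%N -> d (s n) l < e.

Definition compact_set (K : set X) : Prop :=
  forall s : nat -> X, (forall n, K (s n)) ->
    exists (phi : nat -> nat) (l : X),
      (forall n m, (n < m)%N -> (phi n < phi m)%N) /\ K l /\ seq_lim (s \o phi) l.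

Definition diam (A : set X) : R := sup [set d x y | x in A & y in A].

Definition continuous_on (A : set X) (f : X -> R) : Prop :=
  forall x, A x -> forall e : R, 0 < e -> exists2 del : R, 0 < del &
    forall y, A y -> d x y < del -> `|f x - f y| < e.

Definition curve_continuous_on (I : set R) (g : R -> X) : Prop :=
  forall t, I t -> forall e : R, 0 < e -> exists2 del : R, 0 < del &
    forall s, I s -> `|t - s| < del -> d (g t) (g s) < e.

Definition curve_length (g : R -> X) (a b : R) : \bar R :=
  ereal_sup [set L : \bar R | exists (n : nat) (t : nat -> R),
     [/\ t 0%N = a, t n = b, (forall i, (i < n)%N -> t i <= t i.+1) &
         L = (\sum_(i < n) d (g (t i)) (g (t i.+1)))%:E]].

Definition geodesic_space : Prop :=
  forall x y, exists g : R -> X,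
    [/\ curve_continuous_on [set t | 0 <= t <= 1] g, g 0 = x, g 1 = y &
        curve_length g 0 1 = (d x y)%:E].

Definition admissible_radius (Om : set X) (rho : X -> R) : Prop :=
  [/\ continuous_on (mclosure Om) rho,
      (forall x, mclosure Om x -> 0 <= rho x),
      (forall x, Om x -> 0 < rho x /\ forall z, mboundary Om z -> rho x <= d x z)
    & (forall x, mclosure Om x -> (rho x = 0 <-> mboundary Om x))].

Definition cball (x : X) (r : R) : set X := [set z | d x z <= r].

Definition Bx (rho : X -> R) (x : X) : set X := cball x (rho x).

Definition tilde (rho : X -> R) (K : set X) : set X :=
  [set z | exists2 x, K x & Bx rho x z].

Definition Sop (rho : X -> R) (u : X -> R) (x : X) : R :=
  (sup [set u z | z in Bx rho x] + inf [set u z | z in Bx rho x]) / 2.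

Definition modulus_for (A : set X) (g : X -> R) (om : R -> R) : Prop :=
  forall s t, A s -> A t -> `|g s - g t| <= om (d s t).

End MetricDefs.

Section Moduli.
Variable R : realType.

Definition modulus (D : R) (om : R -> R) : Prop :=
  [/\ (forall s t, 0 <= s -> s <= t -> t <= D -> om s <= om t),
      (forall t, 0 <= t <= D -> forall e : R, 0 < e -> exists2 del : R, 0 < del &
          forall s, 0 <= s <= D -> `|t - s| < del -> `|om t - om s| < e),
      om 0 = 0 &
      (forall t, 0 <= t <= D -> 0 <= om t)].

Definition concave_on (D : R) (om : R -> R) : Prop :=
  forall s t l : R, 0 <= s <= D -> 0 <= t <= D -> 0 <= l <= 1 ->
    l * om s + (1 - l) * om t <= om (l * s + (1 - l) * t).

Definition omega_hat (D : R) (om_rho : R -> R) (t : R) : R :=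
  if `[< forall s, 0 <= s <= D -> om_rho s <= s >] then t
  else D / om_rho D * om_rho t.

End Moduli.

From mathcomp Require Import all_boot all_order all_algebra.
From mathcomp Require Import boolp classical_sets reals constructive_ereal ereal.
From mathcomp Require Import ring lra.
Set Implicit Arguments.
Unset Strict Implicit.
Import Order.TTheory GRing.Theory Num.Theory.
Local Open Scope classical_set_scope.
Local Open Scope ring_scope.

(* Pulling a point z of B_x along a geodesic towards y gives a point z' of B_y
   with d(z, z') <= (d(x, y) + rho x - rho y)^+; symmetrically a point w of B_y
   gives w' in B_x with d(w', w) <= (d(x, y) + rho y - rho x)^+.  The radius
   differences cancel in the sum or are bounded by omega_rho(d(x, y)), so
   (d(z, z') + d(w', w)) / 2 <= omega_hat(d(x, y)).  By concavity,
   u z - u w <= (u z - u z') + (u w' - u w) + sup_{B_y} u - inf_{B_x} u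
             <= 2 omega(omega_hat(d(x, y))) + sup_{B_y} u - inf_{B_x} u,
   and taking the sup over z and the inf over w gives the bound on
   Su x - Su y. *)

Section Geodesics.
Variables (R : realType) (X : Type) (d : X -> X -> R).

Lemma geodesic_split (g : R -> X) x y s :
  curve_length d g 0 1 = (d x y)%:E -> g 0 = x -> g 1 = y -> 0 <= s <= 1 ->
  d x (g s) + d (g s) y <= d x y.
Proof.
move=> glen g0 g1 /andP[s0 s1]; rewrite -lee_fin -glen.
apply: ereal_sup_ubound.
exists 2%N, (fun i => if i == 0%N then 0 else if i == 1%N then s else 1).
split => //.
- by case=> [|[|[|i]]] //= _; rewrite ?lexx.
- by rewrite !big_ord_recr big_ord0 /= add0r g0 g1.
Qed.

(* T is the supremum of the times at which g lies in P. *)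
Lemma curve_exit_time (g : R -> X) (P : set X) :
  curve_continuous_on d [set t | 0 <= t <= 1] g -> P (g 0) ->
  exists T, [/\ 0 <= T <= 1, mclosure d P (g T) &
                 T = 1 \/ mclosure d (~` P) (g T)].
Proof.
move=> gcont P0; set S := [set t | (0 <= t <= 1) /\ P (g t)].
have S0 : S 0 by split => //; rewrite lexx ler01.
have supS : has_sup S by split; [exists 0 | exists 1 => t [/andP[]]].
have T0 : 0 <= sup S by exact: sup_upper_bound.
have T1 : sup S <= 1 by apply: ge_sup; [exists 0 | move=> t [/andP[]]].
have TI : 0 <= sup S <= 1 by rewrite T0 T1.
exists (sup S); split => //.
- move=> e e0; have [del del0 near_T] := gcont _ TI e e0.
  have [s [Is Ps] sT] := sup_adherent del0 supS.
  have := sup_upper_bound supS (conj Is Ps) => Ts.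
  by exists (g s) => //; apply: near_T => //; rewrite ger0_norm; lra.
- have [->|T_neq1] := eqVneq (sup S) 1; [by left | right].
  move=> e e0; have [del del0 near_T] := gcont _ TI e e0.
  have [t [tI tT tdel]] : exists t, [/\ 0 <= t <= 1, sup S < t & t - sup S < del].
    have T_lt1 : sup S < 1 by rewrite lt_neqAle T_neq1 T1.
    have [?|?] := lerP (sup S + del / 2) 1.
      by exists (sup S + del / 2); split; lra.
    by exists 1; split; lra.
  exists (g t); last by apply: near_T => //; rewrite ltr0_norm; lra.
  by move=> Pt; have := sup_upper_bound supS (conj tI Pt); lra.
Qed.

Hypothesis d_metric : is_metric d.

Lemma mclosure_cball y r z : mclosure d (cball d y r) z -> d y z <= r.
Proof.
have [_ _ dC dtri] := d_metric => clz.
apply/ler_addgt0Pr => e e0; have [w yw zw] := clz e e0.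
by have := dtri y w z; rewrite (dC w) /cball /= in yw *; lra.
Qed.

Lemma mclosure_cballC y r z : mclosure d (~` cball d y r) z -> r <= d y z.
Proof.
have [_ _ dC dtri] := d_metric => clz.
apply/ler_addgt0Pr => e e0; have [w /negP yw zw] := clz e e0.
by have := dtri y z w; rewrite /cball /= -ltNge in yw; lra.
Qed.

Lemma sub_mclosure (A : set X) : A `<=` mclosure d A.
Proof. by have [_ d0 _ _] := d_metric => x Ax e e0; exists x; rewrite ?(proj2 (d0 x x)). Qed.

Lemma mclosure_dist_le_diam (A : set X) a b :
  bounded_set d A -> mclosure d A a -> mclosure d A b -> d a b <= diam d A.
Proof.
have [_ _ dC dtri] := d_metric => -[M AM] Aa Ab.
apply/ler_addgt0Pr => e e0.
have [a' Aa' aa'] := Aa (e / 2) ltac:(lra).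
have [b' Ab' bb'] := Ab (e / 2) ltac:(lra).
have supA : has_sup [set d x y | x in A & y in A].
  split; first by exists (d a' b'); exists a' => //; exists b'.
  by exists M => _ [x Ax [y Ay <-]]; apply: AM.
have : d a' b' <= diam d A by apply: sup_upper_bound => //; exists a' => //; exists b'.
by have := dtri a a' b; have := dtri a' b' b; rewrite (dC b' b); lra.
Qed.

Hypothesis d_geodesic : geodesic_space d.

(* z' is the point where the geodesic from y to z leaves the ball. *)
Lemma geodesic_cball_proj y z r : 0 <= r ->
  exists2 z', cball d y r z' & d z' z <= Num.max 0 (d y z - r).
Proof.
have [_ d0 _ _] := d_metric => r0.
have [yz_le|yz_gt] := lerP (d y z) r.
  by exists z => //; rewrite (proj2 (d0 z z)) // le_max lexx.
have [g [gcont g0 g1 glen]] := d_geodesic y z.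
have yg0 : cball d y r (g 0) by rewrite /cball /= g0 (proj2 (d0 y y)).
have [T [TI inT [T_eq1|outT]]] := curve_exit_time gcont yg0.
  by have := mclosure_cball inT; rewrite T_eq1 g1; lra.
exists (g T); first exact: mclosure_cball.
have := mclosure_cballC outT; have := geodesic_split glen g0 g1 TI.
by rewrite le_max => ? ?; apply/orP; right; lra.
Qed.

(* Otherwise the point where the geodesic from x to z leaves Om would lie on the
   boundary, at distance >= rho x >= d x z from x, hence would be z itself. *)
Lemma cball_sub_mclosure (Om : set X) rho x :
  admissible_radius d Om rho -> Om x -> Bx d rho x `<=` mclosure d Om.
Proof.
have [d_ge0 d0 _ _] := d_metric => -[_ _ rho_dist _] Ox z xz.
have [//|clz] := pselect (mclosure d Om z).
have [g [gcont g0 g1 glen]] := d_geodesic x z.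
have Og0 : Om (g 0) by rewrite g0.
have [T [TI inT outT]] := curve_exit_time gcont Og0.
have bdT : mboundary d Om (g T).
  split => //; case: outT => [T_eq1|] //.
  rewrite T_eq1 g1 => e e0; exists z; last by rewrite (proj2 (d0 z z)).
  by move=> Oz; apply: clz; apply: sub_mclosure.
have := (rho_dist x Ox).2 _ bdT; have := geodesic_split glen g0 g1 TI.
rewrite /Bx /cball /= in xz => split_T xT.
have : d (g T) z = 0 by apply/eqP; rewrite eq_le d_ge0 andbT; lra.
by move/d0 => <-.
Qed.

End Geodesics.

Section ConcaveModuli.
Variables (R : realType) (D : R) (om : R -> R).
Hypotheses (om_mod : modulus D om) (om_concave : concave_on D om).

Lemma concave_modulus_chord t : 0 < D -> 0 <= t <= D -> t / D * om D <= om t.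
Proof.
have [_ _ om0 _] := om_mod => D0 /andP[t0 tD].
have tD01 : 0 <= t / D <= 1 by rewrite divr_ge0 ?(ltW D0) // ler_pdivrMr // mul1r.
have := @om_concave D 0 (t / D).
rewrite om0 !mulr0 !addr0 mulfVK ?gt_eqF //.
by apply => //; rewrite lexx ?(ltW D0).
Qed.

Lemma concave_midpoint a b : 0 <= a <= D -> 0 <= b <= D ->
  om a + om b <= 2 * om ((a + b) / 2).
Proof.
move=> aD bD; have := @om_concave a b (1 / 2) aD bD ltac:(lra).
have -> : 1 / 2 * a + (1 - 1 / 2) * b = (a + b) / 2 by field.
lra.
Qed.

Lemma omega_hat_bounds t : om D <= D -> 0 <= t <= D ->
  [/\ t <= omega_hat D om t, om t <= omega_hat D om t & omega_hat D om t <= D].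
Proof.
have [om_mono _ om0 om_ge0] := om_mod => omD_le tI.
have [t0 tD] := andP tI; have omt := om_ge0 t tI.
rewrite /omega_hat; case: asboolP => [below_id|above_id].
  by split => //; apply: below_id.
have [s sI s_lt] : exists2 s, 0 <= s <= D & s < om s.
  apply: contra_notP above_id => no_s s sI; rewrite leNgt; apply/negP => ?.
  by apply: no_s; exists s.
have [s0 sD] := andP sI; have := om_mono s D s0 sD (lexx D) => oms_le.
have D0 : 0 < D by lra.
have omD0 : 0 < om D by lra.
set c := D / om D.
have c1 : 1 <= c by rewrite ler_pdivlMr // mul1r.
have cD : c * om D = D by rewrite mulfVK ?gt_eqF.
have chord := concave_modulus_chord D0 tI.
have omtD := om_mono t D t0 tD (lexx D).
split.
- have : c * (t / D * om D) <= c * om t by apply: ler_wpM2l; lra.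
  by rewrite mulrCA cD mulfVK ?gt_eqF.
- nra.
- by rewrite -[X in _ <= X]cD ler_wpM2l //; lra.
Qed.

End ConcaveModuli.

Section Smoothing.
Variables (R : realType) (X : Type) (d : X -> X -> R) (Om : set X).
Variables (rho : X -> R) (om_rho : R -> R) (u : X -> R) (K : set X) (om : R -> R).
Hypotheses (d_metric : is_metric d) (d_geodesic : geodesic_space d).
Hypotheses (Om_bounded : bounded_set d Om) (rho_adm : admissible_radius d Om rho).
Hypotheses (om_rho_mod : modulus (diam d Om) om_rho).
Hypotheses (om_rho_concave : concave_on (diam d Om) om_rho).
Hypotheses (rho_modulus : modulus_for d Om rho om_rho).
Hypotheses (om_rho_le : om_rho (diam d Om) <= diam d Om) (K_sub : K `<=` Om).
Hypotheses (om_mod : modulus (diam d Om) om) (om_concave : concave_on (diam d Om) om).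
Hypothesis u_modulus : modulus_for d (tilde d rho K) u om.

Local Notation D := (diam d Om).
Local Notation hat t := (omega_hat D om_rho t).
Local Notation uB p := [set u z | z in Bx d rho p].

Lemma K_sub_mclosure : K `<=` mclosure d Om.
Proof. by move=> p /K_sub; apply: sub_mclosure. Qed.

Lemma rho_ge0K p : K p -> 0 <= rho p.
Proof. by have [_ rho_ge0 _ _] := rho_adm => /K_sub_mclosure /rho_ge0. Qed.

Lemma Bx_center p : K p -> Bx d rho p p.
Proof.
by have [_ d0 _ _] := d_metric => Kp; rewrite /Bx /cball /= (proj2 (d0 p p) erefl) rho_ge0K.
Qed.

Lemma tilde_sub_mclosure : tilde d rho K `<=` mclosure d Om.
Proof. by move=> z [p /K_sub Op /(cball_sub_mclosure d_metric d_geodesic rho_adm Op)]. Qed.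

Lemma tilde_dist_le_diam s t : tilde d rho K s -> tilde d rho K t -> d s t <= D.
Proof. by move=> Ts Tt; apply: mclosure_dist_le_diam => //; apply: tilde_sub_mclosure. Qed.

Lemma u_sub_le s t : tilde d rho K s -> tilde d rho K t -> u s - u t <= om (d s t).
Proof. by move=> Ts Tt; have /ler_normlP[] := u_modulus Ts Tt. Qed.

Lemma u_ball_bound p z : K p -> Bx d rho p z -> `|u z - u p| <= om D.
Proof.
have [d_ge0 _ _ _] := d_metric; have [om_mono _ _ _] := om_mod => Kp pz.
have Tz : tilde d rho K z by exists p.
have Tp : tilde d rho K p by exists p => //; apply: Bx_center.
apply: le_trans (u_modulus Tz Tp) _.
by apply: om_mono; rewrite ?d_ge0 ?tilde_dist_le_diam.
Qed.

Lemma uB_neq0 p : K p -> uB p !=set0.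
Proof. by move=> Kp; exists (u p), p => //; apply: Bx_center. Qed.

Lemma has_sup_uB p : K p -> has_sup (uB p).
Proof.
move=> Kp; split; first exact: uB_neq0.
by exists (u p + om D) => _ [z pz <-]; have /ler_normlP[] := u_ball_bound Kp pz; lra.
Qed.

Lemma has_inf_uB p : K p -> has_inf (uB p).
Proof.
move=> Kp; split; first exact: uB_neq0.
by exists (u p - om D) => _ [z pz <-]; have /ler_normlP[] := u_ball_bound Kp pz; lra.
Qed.

Lemma omega_hat_dist_bounds x y : K x -> K y ->
  [/\ d x y <= hat (d x y), om_rho (d x y) <= hat (d x y) & hat (d x y) <= D].
Proof.
have [d_ge0 _ _ _] := d_metric => Kx Ky.
apply: omega_hat_bounds => //; rewrite d_ge0 mclosure_dist_le_diam //.
all: exact: K_sub_mclosure.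
Qed.

Lemma ball_transfer x y z w : K x -> K y -> Bx d rho x z -> Bx d rho y w ->
  exists z' w', [/\ Bx d rho y z', Bx d rho x w' & d z z' + d w' w <= 2 * hat (d x y)].
Proof.
have [_ _ dC dtri] := d_metric => Kx Ky xz yw.
have [z' yz' z'z] := geodesic_cball_proj d_metric d_geodesic y z (rho_ge0K Ky).
have [w' xw' w'w] := geodesic_cball_proj d_metric d_geodesic x w (rho_ge0K Kx).
exists z', w'; split => //.
have [hat_id hat_rho _] := omega_hat_dist_bounds Kx Ky.
have /ler_normlP[? ?] := rho_modulus (K_sub Kx) (K_sub Ky).
rewrite (dC z') in z'z; rewrite /Bx /cball /= in xz yw.
have := dtri y x z; have := dtri x y w; rewrite (dC y x).
by move: z'z w'w; rewrite !le_max => /orP[] ? /orP[] ?; lra.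
Qed.

Lemma u_ball_gap x y z w : K x -> K y -> Bx d rho x z -> Bx d rho y w ->
  u z - u w <= sup (uB y) - inf (uB x) + 2 * om (hat (d x y)).
Proof.
have [d_ge0 _ _ _] := d_metric; have [om_mono _ _ _] := om_mod.
move=> Kx Ky xz yw; have [z' [w' [yz' xw' shift]]] := ball_transfer Kx Ky xz yw.
have [Tz Tz'] : tilde d rho K z /\ tilde d rho K z' by split; [exists x | exists y].
have [Tw Tw'] : tilde d rho K w /\ tilde d rho K w' by split; [exists y | exists x].
have aI : 0 <= d z z' <= D by rewrite d_ge0 tilde_dist_le_diam.
have bI : 0 <= d w' w <= D by rewrite d_ge0 tilde_dist_le_diam.
have mid := concave_midpoint om_concave aI bI.
have [_ _ hat_le] := omega_hat_dist_bounds Kx Ky.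
have := om_mono ((d z z' + d w' w) / 2) (hat (d x y)).
move: aI bI => /andP[? _] /andP[? _] /(_ ltac:(lra) ltac:(lra) hat_le) om_le.
have := u_sub_le Tz Tz'; have := u_sub_le Tw' Tw.
have : u z' <= sup (uB y) by apply: (sup_upper_bound (has_sup_uB Ky)); exists z'.
have : inf (uB x) <= u w' by apply: (ge_inf (has_inf_uB Kx).2); exists w'.
lra.
Qed.

Lemma Sop_sub_le x y : K x -> K y ->
  Sop d rho u x - Sop d rho u y <= om (hat (d x y)).
Proof.
move=> Kx Ky; rewrite /Sop; set C := 2 * om (hat (d x y)).
suff : sup (uB x) - (sup (uB y) - inf (uB x) + C) <= inf (uB y) by rewrite /C; lra.
apply: lb_le_inf (uB_neq0 Ky) _ => _ [w yw <-].
suff : sup (uB x) <= u w + (sup (uB y) - inf (uB x) + C) by lra.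
apply: ge_sup (uB_neq0 Kx) _ => _ [z xz <-].
by have := u_ball_gap Kx Ky xz yw; rewrite -/C; lra.
Qed.

Lemma Sop_dist_le x y : K x -> K y ->
  `|Sop d rho u x - Sop d rho u y| <= om (hat (d x y)).
Proof.
have [_ _ dC _] := d_metric => Kx Ky.
have := Sop_sub_le Ky Kx; rewrite dC => yx.
by rewrite ler_norml lerNl opprB yx Sop_sub_le.
Qed.

End Smoothing.

Theorem lemma3p12 (R : realType) (X : Type) (d : X -> X -> R)
  (Om : set X) (rho : X -> R) (om_rho : R -> R) (u : X -> R)
  (K : set X) (om : R -> R) :
  is_metric d -> geodesic_space d ->
  domain d Om -> bounded_set d Om ->
  admissible_radius d Om rho ->
  modulus (diam d Om) om_rho -> concave_on (diam d Om) om_rho ->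
  modulus_for d Om rho om_rho -> om_rho (diam d Om) <= diam d Om ->
  continuous_on d (mclosure d Om) u ->
  K `<=` Om -> compact_set d K ->
  modulus (diam d Om) om -> concave_on (diam d Om) om ->
  modulus_for d (tilde d rho K) u om ->
  forall x y, K x -> K y ->
    `|Sop d rho u x - Sop d rho u y| <= om (omega_hat (diam d Om) om_rho (d x y)).
Proof.
move=> d_metric d_geodesic _ Om_bounded rho_adm om_rho_mod om_rho_concave
  rho_modulus om_rho_le _ K_sub _ om_mod om_concave u_modulus x y Kx Ky.
exact: (Sop_dist_le d_metric d_geodesic Om_bounded rho_adm om_rho_mod
  om_rho_concave rho_modulus om_rho_le K_sub om_mod om_concave u_modulus Kx Ky).
Qed.
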